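(* Let $(A,\sigma)$ be a ribbon algebra in a braided monoidal category $\mathcal C$ which is also a Hopf algebra in $\mathcal C$ with invertible antipode $S$, and let $M$ be an $A$-bimodule in $\mathcal C$. Then the morphism $$\blacktriangleleft_R=\triangleleft\;\triangleright_{0,1}\,(\sigma S^{-1}\otimes\mathrm{id}^{\otimes2})\,\Psi_{0,1}\,(\mathrm{id}_M\otimes\Delta):M\otimes A\to M$$ is a right action of $A$ on $M$, i.e. $\blacktriangleleft_R(\blacktriangleleft_R\otimes\mathrm{id}_A)=\blacktriangleleft_R(\mathrm{id}_M\otimes\mu)$. (Here $\Psi_{0,1}:M\otimes A\otimes A\to A\otimes M\otimes A$ braids $M$ with the first copy of $A$.)
   Context: $\mathcal C$ is a braided monoidal category with abelian-group Hom-sets, bilinear composition and tensor product; associativity and unit constraints suppressed; unit object $\mathbf 1$; braiding $\Psi$. Composition read from right to left; in $V_0\otimes\cdots\otimes V_k$ (factors numbered from 0), $f_{i,i+1}$ denotes $f$ applied to factors $i,i+1$. An algebra in $\mathcal C$: object $A$ with associative unital $\mu:A\otimes A\to A$, $\eta:\mathbf 1\to A$. Ribbon algebra: algebra with invertible morphism $\sigma:A\to A$, $\sigma\mu=\mu(\sigma\otimes\sigma)\Psi^2$, $\sigma\eta=\eta$. A Hopf algebra in $\mathcal C$ is an algebra $A$ with morphisms $\Delta:A\to A\otimes A$, $\varepsilon:A\to\mathbf1$ forming a coassociative counital coalgebra, such that $\Delta\mu=(\mu\otimes\mu)\Psi_{1,2}(\Delta\otimes\Delta)$, $\varepsilon\mu=\varepsilon\otimes\varepsilon$,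 $\Delta\eta=\eta\otimes\eta$, $\varepsilon\eta=\mathrm{id}_{\mathbf 1}$, together with a morphism $S:A\to A$ (antipode) with $\mu(S\otimes\mathrm{id})\Delta=\eta\varepsilon=\mu(\mathrm{id}\otimes S)\Delta$. An $A$-bimodule in $\mathcal C$: object $M$ with morphisms $\triangleright:A\otimes M\to M$, $\triangleleft:M\otimes A\to M$, associative unital left resp. right actions with $\triangleright(\mathrm{id}\otimes\triangleleft)=\triangleleft(\triangleright\otimes\mathrm{id})$. *)

(* The associativity and unit constraints, suppressed in the paper, are
   written out explicitly here (non-strict monoidal category). *)
From HB Require Import structures.
From mathcomp Require Import all_boot all_algebra.
Set Implicit Arguments. Unset Strict Implicit. Unset Printing Implicit Defensive.
Import GRing.Theory.
Local Open Scope ring_scope.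

Record CatData := {
  Obj : Type;
  Mor : Obj -> Obj -> zmodType;
  idm : forall a, Mor a a;
  comp : forall a b c, Mor b c -> Mor a b -> Mor a c;
  tens : Obj -> Obj -> Obj;
  tensm : forall a b c d, Mor a b -> Mor c d -> Mor (tens a c) (tens b d);
  unit_obj : Obj;
  assoc : forall a b c, Mor (tens (tens a b) c) (tens a (tens b c));
  assocI : forall a b c, Mor (tens a (tens b c)) (tens (tens a b) c);
  lunit : forall a, Mor (tens unit_obj a) a;
  lunitI : forall a, Mor a (tens unit_obj a);
  runit : forall a, Mor (tens a unit_obj) a;
  runitI : forall a, Mor a (tens a unit_obj);
  braid : forall a b, Mor (tens a b) (tens b a);
  braidI : forall a b, Mor (tens b a) (tens a b)
}.

Arguments idm {_} a.
Arguments comp {_ a b c}.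
Arguments tens {_}.
Arguments tensm {_ a b c d}.
Arguments unit_obj {_}.
Arguments assoc {_} a b c.
Arguments assocI {_} a b c.
Arguments lunit {_} a.
Arguments lunitI {_} a.
Arguments runit {_} a.
Arguments runitI {_} a.
Arguments braid {_} a b.
Arguments braidI {_} a b.

Notation "g ∘ f" := (comp g f) (at level 40, left associativity).
Notation "f ⊗ g" := (tensm f g) (at level 35).
Notation "a ⊗o b" := (tens a b) (at level 35).

Section CatAx.
Variable D : CatData.
Implicit Types a b c d e k : Obj D.

Definition cat_axioms : Prop :=
  (forall a b c d (f : Mor a b) (g : Mor b c) (h : Mor c d), h ∘ (g ∘ f) = (h ∘ g) ∘ f) /\
  (forall a b (f : Mor a b), idm b ∘ f = f) /\
  (forall a b (f : Mor a b), f ∘ idm a = f) /\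
  (forall a b c (g g' : Mor b c) (f : Mor a b), (g + g') ∘ f = g ∘ f + g' ∘ f) /\
  (forall a b c (g : Mor b c) (f f' : Mor a b), g ∘ (f + f') = g ∘ f + g ∘ f') /\
  (forall a c, idm a ⊗ idm c = idm (a ⊗o c)) /\
  (forall a b e c d k (f : Mor a b) (f' : Mor b e) (g : Mor c d) (g' : Mor d k),
      (f' ∘ f) ⊗ (g' ∘ g) = (f' ⊗ g') ∘ (f ⊗ g)) /\
  (forall a b c d (f f' : Mor a b) (g : Mor c d), (f + f') ⊗ g = f ⊗ g + f' ⊗ g) /\
  (forall a b c d (f : Mor a b) (g g' : Mor c d), f ⊗ (g + g') = f ⊗ g + f ⊗ g') /\
  (forall a b c, assocI a b c ∘ assoc a b c = idm _) /\
  (forall a b c, assoc a b c ∘ assocI a b c = idm _) /\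
  (forall a a' b b' c c' (f : Mor a a') (g : Mor b b') (h : Mor c c'),
      assoc a' b' c' ∘ ((f ⊗ g) ⊗ h) = (f ⊗ (g ⊗ h)) ∘ assoc a b c) /\
  (forall a, lunitI a ∘ lunit a = idm _) /\
  (forall a, lunit a ∘ lunitI a = idm _) /\
  (forall a b (f : Mor a b), lunit b ∘ (idm unit_obj ⊗ f) = f ∘ lunit a) /\
  (forall a, runitI a ∘ runit a = idm _) /\
  (forall a, runit a ∘ runitI a = idm _) /\
  (forall a b (f : Mor a b), runit b ∘ (f ⊗ idm unit_obj) = f ∘ runit a) /\
  (forall a b c d,
      (idm a ⊗ assoc b c d) ∘ assoc a (b ⊗o c) d ∘ (assoc a b c ⊗ idm d)
      = assoc a b (c ⊗o d) ∘ assoc (a ⊗o b) c d) /\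
  (forall a b, (idm a ⊗ lunit b) ∘ assoc a unit_obj b = runit a ⊗ idm b) /\
  (forall a b, braidI a b ∘ braid a b = idm _) /\
  (forall a b, braid a b ∘ braidI a b = idm _) /\
  (forall a a' b b' (f : Mor a a') (g : Mor b b'),
      braid a' b' ∘ (f ⊗ g) = (g ⊗ f) ∘ braid a b) /\
  (forall a b c,
      assoc b c a ∘ braid a (b ⊗o c) ∘ assoc a b c
      = (idm b ⊗ braid a c) ∘ assoc b a c ∘ (braid a b ⊗ idm c)) /\
  (forall a b c,
      assocI c a b ∘ braid (a ⊗o b) c ∘ assocI a b c
      = (braid a c ⊗ idm b) ∘ assocI a c b ∘ (idm a ⊗ braid b c)).

End CatAx.

Record BraidedCat := {
  bc_data :> CatData;
  bc_axioms : cat_axioms bc_data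
}.

Section Structures.
Variable C : BraidedCat.
Implicit Types A M : Obj C.

Definition is_algebra (A : Obj C) (mu : Mor (A ⊗o A) A) (eta : Mor unit_obj A) : Prop :=
  mu ∘ (mu ⊗ idm A) = mu ∘ (idm A ⊗ mu) ∘ assoc A A A /\
  mu ∘ (eta ⊗ idm A) = lunit A /\
  mu ∘ (idm A ⊗ eta) = runit A.

Definition is_ribbon_algebra (A : Obj C) (mu : Mor (A ⊗o A) A) (eta : Mor unit_obj A)
    (sigma : Mor A A) : Prop :=
  is_algebra mu eta /\
  (exists sigma' : Mor A A, sigma ∘ sigma' = idm A /\ sigma' ∘ sigma = idm A) /\
  sigma ∘ mu = mu ∘ (sigma ⊗ sigma) ∘ braid A A ∘ braid A A /\
  sigma ∘ eta = eta.

Definition is_coalgebra (A : Obj C) (Delta : Mor A (A ⊗o A)) (eps : Mor A unit_obj) : Prop :=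
  (Delta ⊗ idm A) ∘ Delta = assocI A A A ∘ (idm A ⊗ Delta) ∘ Delta /\
  (eps ⊗ idm A) ∘ Delta = lunitI A /\
  (idm A ⊗ eps) ∘ Delta = runitI A.

Definition Psi12 (A : Obj C) : Mor ((A ⊗o A) ⊗o (A ⊗o A)) ((A ⊗o A) ⊗o (A ⊗o A)) :=
  assocI A A (A ⊗o A)
  ∘ (idm A ⊗ (assoc A A A ∘ (braid A A ⊗ idm A) ∘ assocI A A A))
  ∘ assoc A A (A ⊗o A).

Definition is_hopf_algebra (A : Obj C) (mu : Mor (A ⊗o A) A) (eta : Mor unit_obj A)
    (Delta : Mor A (A ⊗o A)) (eps : Mor A unit_obj) (S : Mor A A) : Prop :=
  is_algebra mu eta /\
  is_coalgebra Delta eps /\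
  Delta ∘ mu = (mu ⊗ mu) ∘ Psi12 A ∘ (Delta ⊗ Delta) /\
  eps ∘ mu = lunit unit_obj ∘ (eps ⊗ eps) /\
  Delta ∘ eta = (eta ⊗ eta) ∘ lunitI unit_obj /\
  eps ∘ eta = idm unit_obj /\
  mu ∘ (S ⊗ idm A) ∘ Delta = eta ∘ eps /\
  mu ∘ (idm A ⊗ S) ∘ Delta = eta ∘ eps.

Definition is_bimodule (A : Obj C) (mu : Mor (A ⊗o A) A) (eta : Mor unit_obj A)
    (M : Obj C) (l : Mor (A ⊗o M) M) (r : Mor (M ⊗o A) M) : Prop :=
  l ∘ (mu ⊗ idm M) = l ∘ (idm A ⊗ l) ∘ assoc A A M /\
  l ∘ (eta ⊗ idm M) = lunit M /\
  r ∘ (r ⊗ idm A) = r ∘ (idm M ⊗ mu) ∘ assoc M A A /\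
  r ∘ (idm M ⊗ eta) = runit M /\
  l ∘ (idm A ⊗ r) ∘ assoc A M A = r ∘ (l ⊗ idm A).

(* The morphism  ◀_R = ◁ ▷_{0,1} (σ S^{-1} ⊗ id^{⊗2}) Ψ_{0,1} (id_M ⊗ Δ) : M ⊗ A -> M,
   with the associativity constraints made explicit. *)
Definition blackR (A M : Obj C) (Delta : Mor A (A ⊗o A)) (sigma Sinv : Mor A A)
    (l : Mor (A ⊗o M) M) (r : Mor (M ⊗o A) M) : Mor (M ⊗o A) M :=
  r ∘ (l ⊗ idm A) ∘ assocI A M A
  ∘ ((sigma ∘ Sinv) ⊗ idm (M ⊗o A))
  ∘ (assoc A M A ∘ (braid M A ⊗ idm A) ∘ assocI M A A)
  ∘ (idm M ⊗ Delta).

End Structures.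

From mathcomp Require Import all_boot all_algebra.
Set Implicit Arguments. Unset Strict Implicit. Unset Printing Implicit Defensive.
Set Maximal Implicit Insertion.

(* The antipode of a Hopf algebra in a braided category is braided anti-multiplicative,
   S μ = μ (S ⊗ S) Ψ, by the usual convolution-inverse argument.  Together with
   σ μ = μ (σ ⊗ σ) Ψ² this makes τ = σ S⁻¹ anti-multiplicative, so L = ▷ (τ ⊗ id) Ψ_{M,A}
   is a right action, and the bimodule axiom makes L commute with ◁ up to the braiding.
   Now ◀_R = ◁ (L ⊗ id) (id ⊗ Δ) is the diagonal combination of these two right actions,
   which is again a right action because Δ is multiplicative. *)

Section CategoryLaws.
Variable C : BraidedCat.
Local Notation Ob := (Obj C).
Local Notation I := (@unit_obj C).

Lemma compA {a b c d : Ob} {f : Mor a b} {g : Mor b c} {h : Mor c d} :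
  h ∘ (g ∘ f) = h ∘ g ∘ f.
Proof. by case: (bc_axioms C). Qed.
Lemma comp1m {a b : Ob} {f : Mor a b} : idm b ∘ f = f.
Proof. by move: (bc_axioms C); do 1!case=> _; case. Qed.
Lemma compm1 {a b : Ob} {f : Mor a b} : f ∘ idm a = f.
Proof. by move: (bc_axioms C); do 2!case=> _; case. Qed.
Lemma tensm_idm {a c : Ob} : idm a ⊗ idm c = idm (a ⊗o c).
Proof. by move: (bc_axioms C); do 5!case=> _; case. Qed.
Lemma tensm_comp {a b e c d k : Ob} {f : Mor a b} {f' : Mor b e} {g : Mor c d} {g' : Mor d k} :
  (f' ∘ f) ⊗ (g' ∘ g) = (f' ⊗ g') ∘ (f ⊗ g).
Proof. by move: (bc_axioms C); do 6!case=> _; case. Qed.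
Lemma assocK {a b c : Ob} : assocI a b c ∘ assoc a b c = idm _.
Proof. by move: (bc_axioms C); do 9!case=> _; case. Qed.
Lemma assocIK {a b c : Ob} : assoc a b c ∘ assocI a b c = idm _.
Proof. by move: (bc_axioms C); do 10!case=> _; case. Qed.
Lemma assoc_nat {a a' b b' c c' : Ob} {f : Mor a a'} {g : Mor b b'} {h : Mor c c'} :
  assoc a' b' c' ∘ ((f ⊗ g) ⊗ h) = (f ⊗ (g ⊗ h)) ∘ assoc a b c.
Proof. by move: (bc_axioms C); do 11!case=> _; case. Qed.
Lemma lunitIK {a : Ob} : lunit a ∘ lunitI a = idm _.
Proof. by move: (bc_axioms C); do 13!case=> _; case. Qed.
Lemma lunit_nat {a b : Ob} {f : Mor a b} : lunit b ∘ (idm I ⊗ f) = f ∘ lunit a.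
Proof. by move: (bc_axioms C); do 14!case=> _; case. Qed.
Lemma runitIK {a : Ob} : runit a ∘ runitI a = idm _.
Proof. by move: (bc_axioms C); do 16!case=> _; case. Qed.
Lemma runit_nat {a b : Ob} {f : Mor a b} : runit b ∘ (f ⊗ idm I) = f ∘ runit a.
Proof. by move: (bc_axioms C); do 17!case=> _; case. Qed.
Lemma pentagon {a b c d : Ob} :
  (idm a ⊗ assoc b c d) ∘ assoc a (b ⊗o c) d ∘ (assoc a b c ⊗ idm d)
  = assoc a b (c ⊗o d) ∘ assoc (a ⊗o b) c d.
Proof. by move: (bc_axioms C); do 18!case=> _; case. Qed.
Lemma triangle {a b : Ob} : (idm a ⊗ lunit b) ∘ assoc a I b = runit a ⊗ idm b.
Proof. by move: (bc_axioms C); do 19!case=> _; case. Qed.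
Lemma braidIK {a b : Ob} : braid a b ∘ braidI a b = idm _.
Proof. by move: (bc_axioms C); do 21!case=> _; case. Qed.
Lemma braid_nat {a a' b b' : Ob} {f : Mor a a'} {g : Mor b b'} :
  braid a' b' ∘ (f ⊗ g) = (g ⊗ f) ∘ braid a b.
Proof. by move: (bc_axioms C); do 22!case=> _; case. Qed.
Lemma hexagon1 {a b c : Ob} :
  assoc b c a ∘ braid a (b ⊗o c) ∘ assoc a b c
  = (idm b ⊗ braid a c) ∘ assoc b a c ∘ (braid a b ⊗ idm c).
Proof. by move: (bc_axioms C); do 23!case=> _; case. Qed.
Lemma hexagon2 {a b c : Ob} :
  assocI c a b ∘ braid (a ⊗o b) c ∘ assocI a b c
  = (braid a c ⊗ idm b) ∘ assocI a c b ∘ (idm a ⊗ braid b c).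
Proof. by move: (bc_axioms C); do 24!case=> _. Qed.

(* A left-associated composite [w ∘ x1 ∘ ... ∘ xN] has no subterm [x1 ∘ ... ∘ xN], so
   equations between composites are lifted by [chainN]; the [rwc] tactics below try
   every length and renormalize. *)
Lemma chain2 {a b c : Ob} {x : Mor b c} {y : Mor a b} {z : Mor a c} :
  x ∘ y = z -> forall d (w : Mor c d), w ∘ x ∘ y = w ∘ z.
Proof. by move=> E d w; rewrite -compA E. Qed.
Lemma chain3 {a b c e : Ob} {x : Mor c e} {y : Mor b c} {u : Mor a b} {z : Mor a e} :
  x ∘ y ∘ u = z -> forall d (w : Mor e d), w ∘ x ∘ y ∘ u = w ∘ z.
Proof. by move=> E d w; rewrite -E !compA. Qed.
Lemma chain4 {a b c e k : Ob} {x : Mor e k} {x' : Mor c e} {y : Mor b c} {u : Mor a b}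
    {z : Mor a k} :
  x ∘ x' ∘ y ∘ u = z -> forall d (w : Mor k d), w ∘ x ∘ x' ∘ y ∘ u = w ∘ z.
Proof. by move=> E d w; rewrite -E !compA. Qed.
Lemma chain5 {a b c e k k' : Ob} {x0 : Mor k k'} {x : Mor e k} {x' : Mor c e} {y : Mor b c}
    {u : Mor a b} {z : Mor a k'} :
  x0 ∘ x ∘ x' ∘ y ∘ u = z -> forall d (w : Mor k' d), w ∘ x0 ∘ x ∘ x' ∘ y ∘ u = w ∘ z.
Proof. by move=> E d w; rewrite -E !compA. Qed.
Lemma chain6 {a b c e k k' k'' : Ob} {x1 : Mor k' k''} {x0 : Mor k k'} {x : Mor e k}
    {x' : Mor c e} {y : Mor b c} {u : Mor a b} {z : Mor a k''} :
  x1 ∘ x0 ∘ x ∘ x' ∘ y ∘ u = z ->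
  forall d (w : Mor k'' d), w ∘ x1 ∘ x0 ∘ x ∘ x' ∘ y ∘ u = w ∘ z.
Proof. by move=> E d w; rewrite -E !compA. Qed.
Lemma chain7 {a b c e k k' k'' k3 : Ob} {x2 : Mor k'' k3} {x1 : Mor k' k''} {x0 : Mor k k'}
    {x : Mor e k} {x' : Mor c e} {y : Mor b c} {u : Mor a b} {z : Mor a k3} :
  x2 ∘ x1 ∘ x0 ∘ x ∘ x' ∘ y ∘ u = z ->
  forall d (w : Mor k3 d), w ∘ x2 ∘ x1 ∘ x0 ∘ x ∘ x' ∘ y ∘ u = w ∘ z.
Proof. by move=> E d w; rewrite -E !compA. Qed.
Lemma chain8 {a b c e k k' k'' k3 k4 : Ob} {x3 : Mor k3 k4} {x2 : Mor k'' k3}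
    {x1 : Mor k' k''} {x0 : Mor k k'} {x : Mor e k} {x' : Mor c e} {y : Mor b c}
    {u : Mor a b} {z : Mor a k4} :
  x3 ∘ x2 ∘ x1 ∘ x0 ∘ x ∘ x' ∘ y ∘ u = z ->
  forall d (w : Mor k4 d), w ∘ x3 ∘ x2 ∘ x1 ∘ x0 ∘ x ∘ x' ∘ y ∘ u = w ∘ z.
Proof. by move=> E d w; rewrite -E !compA. Qed.
End CategoryLaws.

Ltac chain_normalize := rewrite ?compA ?tensm_idm ?comp1m ?compm1.
Ltac rw_chain E :=
  first [ rewrite E | rewrite (chain2 E) | rewrite (chain3 E) | rewrite (chain4 E)
        | rewrite (chain5 E) | rewrite (chain6 E) | rewrite (chain7 E) | rewrite (chain8 E) ];
  chain_normalize.
Ltac rw_chainL E :=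
  first [ rewrite [in LHS]E | rewrite [in LHS](chain2 E) | rewrite [in LHS](chain3 E)
        | rewrite [in LHS](chain4 E) | rewrite [in LHS](chain5 E) | rewrite [in LHS](chain6 E)
        | rewrite [in LHS](chain7 E) | rewrite [in LHS](chain8 E) ];
  chain_normalize.
Ltac rw_chainR E :=
  first [ rewrite [in RHS]E | rewrite [in RHS](chain2 E) | rewrite [in RHS](chain3 E)
        | rewrite [in RHS](chain4 E) | rewrite [in RHS](chain5 E) | rewrite [in RHS](chain6 E)
        | rewrite [in RHS](chain7 E) | rewrite [in RHS](chain8 E) ];
  chain_normalize.
Tactic Notation "rwc" uconstr(E) := rw_chain E.
Tactic Notation "rwc" "<-" uconstr(E) := rw_chain uconstr:(esym E).
Tactic Notation "rwcL" uconstr(E) := rw_chainL E.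
Tactic Notation "rwcL" "<-" uconstr(E) := rw_chainL uconstr:(esym E).
Tactic Notation "rwcR" uconstr(E) := rw_chainR E.
Tactic Notation "rwcR" "<-" uconstr(E) := rw_chainR uconstr:(esym E).

Section MonoidalCoherence.
Variable C : BraidedCat.
Local Notation Ob := (Obj C).
Local Notation I := (@unit_obj C).

Lemma assocI_nat {a a' b b' c c' : Ob} {f : Mor a a'} {g : Mor b b'} {h : Mor c c'} :
  assocI a' b' c' ∘ (f ⊗ (g ⊗ h)) = ((f ⊗ g) ⊗ h) ∘ assocI a b c.
Proof. rewrite -[LHS]compm1 -assocIK compA; rwc <- assoc_nat; by rwc assocK. Qed.

Lemma tensm_compl {a b e c : Ob} {f : Mor a b} {f' : Mor b e} :
  (f' ∘ f) ⊗ idm c = (f' ⊗ idm c) ∘ (f ⊗ idm c).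
Proof. by rewrite -{1}[idm c]comp1m tensm_comp. Qed.
Lemma tensm_compr {a b e c : Ob} {f : Mor a b} {f' : Mor b e} :
  idm c ⊗ (f' ∘ f) = (idm c ⊗ f') ∘ (idm c ⊗ f).
Proof. by rewrite -{1}[idm c]comp1m tensm_comp. Qed.
Lemma tensm_comp_idr {a b e c d : Ob} {f : Mor a b} {f' : Mor b e} {g : Mor c d} :
  (f' ∘ f) ⊗ g = (f' ⊗ g) ∘ (f ⊗ idm c).
Proof. by rewrite -tensm_comp compm1. Qed.
Lemma tensm_rfirst {a b c d : Ob} {f : Mor a b} {g : Mor c d} :
  f ⊗ g = (f ⊗ idm d) ∘ (idm a ⊗ g).
Proof. by rewrite -tensm_comp comp1m compm1. Qed.
Lemma tensm_lfirst {a b c d : Ob} {f : Mor a b} {g : Mor c d} :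
  f ⊗ g = (idm b ⊗ g) ∘ (f ⊗ idm c).
Proof. by rewrite -tensm_comp comp1m compm1. Qed.
Lemma interchange {a b c d : Ob} {f : Mor a b} {g : Mor c d} :
  (idm b ⊗ g) ∘ (f ⊗ idm c) = (f ⊗ idm d) ∘ (idm a ⊗ g).
Proof. by rewrite -!tensm_comp !comp1m !compm1. Qed.

Lemma epi_cancel {a b c : Ob} {f g : Mor b c} (h : Mor a b) (h' : Mor b a) :
  h ∘ h' = idm b -> f ∘ h = g ∘ h -> f = g.
Proof. by move=> hh' E; rewrite -[f]compm1 -[g]compm1 -hh' !compA E. Qed.
Lemma mono_cancel {a b c : Ob} {f g : Mor a b} (h : Mor b c) (h' : Mor c b) :
  h' ∘ h = idm b -> h ∘ f = h ∘ g -> f = g.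
Proof. by move=> h'h E; rewrite -[f]comp1m -[g]comp1m -h'h -!compA E. Qed.
Arguments epi_cancel {a b c f g} h h'.
Arguments mono_cancel {a b c f g} h h'.
Lemma unit_tensm_inj {a b : Ob} {f g : Mor a b} : idm I ⊗ f = idm I ⊗ g -> f = g.
Proof.
by move=> E; rewrite -[f]compm1 -lunitIK compA -lunit_nat E lunit_nat -compA lunitIK compm1.
Qed.
Lemma tensm_unit_inj {a b : Ob} {f g : Mor a b} : f ⊗ idm I = g ⊗ idm I -> f = g.
Proof.
by move=> E; rewrite -[f]compm1 -runitIK compA -runit_nat E runit_nat -compA runitIK compm1.
Qed.

Lemma tensm_assoc {a a' b b' c c' : Ob} {f : Mor a a'} {g : Mor b b'} {h : Mor c c'} :
  (f ⊗ g) ⊗ h = assocI a' b' c' ∘ (f ⊗ (g ⊗ h)) ∘ assoc a b c.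
Proof. rwc <- assoc_nat. by rwc assocK. Qed.
Lemma idm_tensm_assoc {a b c c' : Ob} {h : Mor c c'} :
  idm (a ⊗o b) ⊗ h = assocI a b c' ∘ (idm a ⊗ (idm b ⊗ h)) ∘ assoc a b c.
Proof. by rewrite -tensm_idm tensm_assoc. Qed.
Lemma assoc_natl {a a' b c : Ob} {f : Mor a a'} :
  (f ⊗ idm (b ⊗o c)) ∘ assoc a b c = assoc a' b c ∘ ((f ⊗ idm b) ⊗ idm c).
Proof. by rewrite -tensm_idm assoc_nat. Qed.
Lemma assocI_natl {a a' b c : Ob} {f : Mor a a'} :
  assocI a' b c ∘ (f ⊗ idm (b ⊗o c)) = ((f ⊗ idm b) ⊗ idm c) ∘ assocI a b c.
Proof. by rewrite -tensm_idm assocI_nat. Qed.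
Lemma assoc_natr {a b c c' : Ob} {h : Mor c c'} :
  assoc a b c' ∘ (idm (a ⊗o b) ⊗ h) = (idm a ⊗ (idm b ⊗ h)) ∘ assoc a b c.
Proof. by rewrite -tensm_idm assoc_nat. Qed.
Lemma assocI_natr {a b c c' : Ob} {h : Mor c c'} :
  (idm (a ⊗o b) ⊗ h) ∘ assocI a b c = assocI a b c' ∘ (idm a ⊗ (idm b ⊗ h)).
Proof. by rewrite -tensm_idm assocI_nat. Qed.

Lemma pentagonVl {a b c d : Ob} :
  assoc a (b ⊗o c) d ∘ (assoc a b c ⊗ idm d) ∘ assocI (a ⊗o b) c d
  = (idm a ⊗ assocI b c d) ∘ assoc a b (c ⊗o d).
Proof.
transitivity ((idm a ⊗ assocI b c d) ∘ (idm a ⊗ assoc b c d) ∘ assoc a (b ⊗o c) d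
   ∘ (assoc a b c ⊗ idm d) ∘ assocI (a ⊗o b) c d).
  by rwc <- tensm_compr; rewrite assocK tensm_idm comp1m.
by rwc pentagon; rwc assocIK.
Qed.
Lemma pentagonVr {a b c d : Ob} :
  assoc (a ⊗o b) c d ∘ (assocI a b c ⊗ idm d) ∘ assocI a (b ⊗o c) d
  = assocI a b (c ⊗o d) ∘ (idm a ⊗ assoc b c d).
Proof.
transitivity (assocI a b (c ⊗o d) ∘ (idm a ⊗ assoc b c d) ∘ assoc a (b ⊗o c) d
   ∘ (assoc a b c ⊗ idm d) ∘ (assocI a b c ⊗ idm d) ∘ assocI a (b ⊗o c) d).
  by rwc pentagon; rwc assocK.
by rwc <- tensm_compl; rewrite assocIK tensm_idm compm1; rwc assocIK.
Qed.
Lemma pentagonV {a b c d : Ob} :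
  (assocI a b c ⊗ idm d) ∘ assocI a (b ⊗o c) d ∘ (idm a ⊗ assocI b c d)
  = assocI (a ⊗o b) c d ∘ assocI a b (c ⊗o d).
Proof.
apply: (mono_cancel (assoc a b (c ⊗o d) ∘ assoc (a ⊗o b) c d)
                    (assocI (a ⊗o b) c d ∘ assocI a b (c ⊗o d))).
  by rewrite !compA; rwc assocK; rewrite assocK.
rewrite !compA; rwc assocIK; rewrite assocIK; rwc <- pentagon.
rwc <- tensm_compl; rewrite assocIK tensm_idm compm1; rwc assocIK.
by rwc <- tensm_compr; rewrite assocIK tensm_idm.
Qed.
Lemma pentagonV' {a b c d : Ob} :
  (assocI a b c ⊗ idm d) ∘ assocI a (b ⊗o c) d
  = assocI (a ⊗o b) c d ∘ assocI a b (c ⊗o d) ∘ (idm a ⊗ assoc b c d).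
Proof. by rewrite -pentagonV -!compA -tensm_compr assocK tensm_idm !compm1. Qed.

Lemma lunit_tens {b c : Ob} : lunit (b ⊗o c) ∘ assoc I b c = lunit b ⊗ idm c.
Proof.
apply: unit_tensm_inj.
apply: (epi_cancel (assoc I (I ⊗o b) c ∘ (assoc I I b ⊗ idm c))
                   ((assocI I I b ⊗ idm c) ∘ assocI I (I ⊗o b) c)).
  by rewrite !compA; rwc <- tensm_compl; rewrite assocIK tensm_idm compm1 assocIK.
rewrite tensm_compr !compA; rwc pentagon; rwc triangle.
rewrite -tensm_idm; rwc <- assoc_nat; rwc <- triangle.
by rewrite tensm_compl !compA; rwc assoc_nat.
Qed.
Lemma lunit_tens_assocI {b c : Ob} : (lunit b ⊗ idm c) ∘ assocI I b c = lunit (b ⊗o c).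
Proof. by rewrite -lunit_tens -compA assocIK compm1. Qed.

Lemma runit_tens {a b : Ob} : runit (a ⊗o b) = (idm a ⊗ runit b) ∘ assoc a b I.
Proof.
apply: tensm_unit_inj; apply: (mono_cancel (assoc a b I) (assocI a b I)); first exact: assocK.
rewrite -triangle -tensm_idm !compA; rwc assoc_nat; rwc <- pentagon; rwc <- tensm_compr.
by rewrite triangle; rwc <- assoc_nat; rwc <- tensm_compl.
Qed.
Lemma runit_tens_assocI {a b : Ob} : runit (a ⊗o b) ∘ assocI a b I = idm a ⊗ runit b.
Proof. by rewrite runit_tens -compA assocIK compm1. Qed.

Lemma runit_braid {c : Ob} : runit c ∘ braid I c = lunit c.
Proof.
have E b : lunit c ⊗ idm b = (runit c ∘ braid I c) ⊗ idm b.
  apply: (epi_cancel (assocI I c b ∘ (idm I ⊗ braid b c))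
                     ((idm I ⊗ braidI b c) ∘ assoc I c b)).
    by rewrite !compA; rwc <- tensm_compr; rewrite braidIK tensm_idm compm1 assocK.
  transitivity ((idm c ⊗ lunit b) ∘ assoc c I b
                ∘ (assocI c I b ∘ braid (I ⊗o b) c ∘ assocI I b c)).
    rewrite !compA; rwc assocIK; rwc <- braid_nat; rwc lunit_tens_assocI.
    by rwc lunit_tens_assocI; rewrite lunit_nat.
  by rewrite hexagon2 !compA triangle; rwc <- tensm_compl.
by apply: tensm_unit_inj; rewrite E.
Qed.

Lemma braid_tensl {a b c : Ob} :
  braid (a ⊗o b) c
  = assoc c a b ∘ (braid a c ⊗ idm b) ∘ assocI a c b ∘ (idm a ⊗ braid b c) ∘ assoc a b c.
Proof. rwc <- hexagon2; rwc assocIK; by rwc assocK. Qed.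

Lemma assoc_braid_mid {x y z w : Ob} :
  assoc (x ⊗o z) y w ∘ (assocI x z y ⊗ idm w) ∘ ((idm x ⊗ braid y z) ⊗ idm w)
  ∘ (assoc x y z ⊗ idm w) ∘ assocI (x ⊗o y) z w
  = assocI x z (y ⊗o w) ∘ (idm x ⊗ assoc z y w) ∘ (idm x ⊗ (braid y z ⊗ idm w))
    ∘ (idm x ⊗ assocI y z w) ∘ assoc x y (z ⊗o w).
Proof. rewrite [(_ ⊗ braid y z) ⊗ _]tensm_assoc !compA; rwc pentagonVr; by rwc pentagonVl. Qed.

Lemma assoc_braid_last {x y z w : Ob} :
  (assocI x w y ⊗ idm z) ∘ ((idm x ⊗ braid y w) ⊗ idm z) ∘ (assoc x y w ⊗ idm z)
  ∘ assocI (x ⊗o y) w z ∘ (idm (x ⊗o y) ⊗ braid z w) ∘ assoc (x ⊗o y) z w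
  = assocI (x ⊗o w) y z ∘ assocI x w (y ⊗o z) ∘ (idm x ⊗ assoc w y z)
  ∘ (idm x ⊗ (braid y w ⊗ idm z)) ∘ (idm x ⊗ assocI y w z) ∘ (idm x ⊗ (idm y ⊗ braid z w))
  ∘ (idm x ⊗ assoc y z w) ∘ assoc x (y ⊗o z) w ∘ (assoc x y z ⊗ idm w).
Proof.
rewrite [(_ ⊗ braid y w) ⊗ _]tensm_assoc [idm (x ⊗o y) ⊗ _]idm_tensm_assoc !compA.
rwc pentagonVl; rwc assocIK; rwc <- pentagon; by rwc pentagonV'.
Qed.

Lemma assoc_conj_inner {m x y z W V : Ob} (h : Mor (y ⊗o W) (z ⊗o V)) :
  (assoc m x z ⊗ idm V) ∘ assocI (m ⊗o x) z V ∘ (idm (m ⊗o x) ⊗ h) ∘ assoc (m ⊗o x) y W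
  ∘ (assocI m x y ⊗ idm W)
  = assocI m (x ⊗o z) V ∘ (idm m ⊗ assocI x z V) ∘ (idm m ⊗ (idm x ⊗ h))
    ∘ (idm m ⊗ assoc x y W) ∘ assoc m (x ⊗o y) W.
Proof.
have pentagon_out (a b c d : Ob) :
    (assoc a b c ⊗ idm d) ∘ assocI (a ⊗o b) c d ∘ assocI a b (c ⊗o d)
    = assocI a (b ⊗o c) d ∘ (idm a ⊗ assocI b c d).
  by rwcL <- pentagonV; rwcL <- tensm_compl; rewrite assocIK tensm_idm comp1m.
have pentagon_in (a b c d : Ob) :
    assoc a b (c ⊗o d) ∘ assoc (a ⊗o b) c d ∘ (assocI a b c ⊗ idm d)
    = (idm a ⊗ assoc b c d) ∘ assoc a (b ⊗o c) d.
  by rewrite -pentagon; rwc <- tensm_compl; rewrite assocIK tensm_idm compm1.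
by rewrite [idm (m ⊗o x) ⊗ h]idm_tensm_assoc !compA; rwc (pentagon_out _ _ _ _); rwc (pentagon_in _ _ _ _).
Qed.
End MonoidalCoherence.
Arguments mono_cancel {C a b c f g} h h'.

Section Notions.
Variable C : BraidedCat.
Variables A M : Obj C.

Definition antimultiplicative (mu : Mor (A ⊗o A) A) (f : Mor A A) : Prop :=
  f ∘ mu = mu ∘ (f ⊗ f) ∘ braid A A.

Definition right_action (mu : Mor (A ⊗o A) A) (r : Mor (M ⊗o A) M) : Prop :=
  r ∘ (r ⊗ idm A) = r ∘ (idm M ⊗ mu) ∘ assoc M A A.

Definition twisted_action (l : Mor (A ⊗o M) M) (tau : Mor A A) : Mor (M ⊗o A) M :=
  l ∘ (tau ⊗ idm M) ∘ braid M A.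

Definition diagonal_action (Delta : Mor A (A ⊗o A)) (r L : Mor (M ⊗o A) M) : Mor (M ⊗o A) M :=
  r ∘ (L ⊗ idm A) ∘ assocI M A A ∘ (idm M ⊗ Delta).
End Notions.

Section Antipode.
Variable C : BraidedCat.
Local Notation Ob := (Obj C).
Local Notation I := (@unit_obj C).
Variable A : Ob.
Variables (mu : Mor (A ⊗o A) A) (eta : Mor I A) (D : Mor A (A ⊗o A)) (eps : Mor A I).
Variable S : Mor A A.
Hypothesis mulA : mu ∘ (mu ⊗ idm A) = mu ∘ (idm A ⊗ mu) ∘ assoc A A A.
Hypothesis mulm1 : mu ∘ (idm A ⊗ eta) = runit A.
Hypothesis coassoc : (D ⊗ idm A) ∘ D = assocI A A A ∘ (idm A ⊗ D) ∘ D.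
Hypothesis counitl : (eps ⊗ idm A) ∘ D = lunitI A.
Hypothesis counitr : (idm A ⊗ eps) ∘ D = runitI A.
Hypothesis comul_mul : D ∘ mu = (mu ⊗ mu) ∘ Psi12 A ∘ (D ⊗ D).
Hypothesis counit_mul : eps ∘ mu = lunit I ∘ (eps ⊗ eps).
Hypothesis antipodel : mu ∘ (S ⊗ idm A) ∘ D = eta ∘ eps.
Hypothesis antipoder : mu ∘ (idm A ⊗ S) ∘ D = eta ∘ eps.

(* Convolution in the last tensor factor: x ⊗ a ↦ F(x ⊗ a₍₁₎) G(a₍₂₎). *)
Definition convr {X : Ob} (F : Mor (X ⊗o A) A) (G : Mor A A) : Mor (X ⊗o A) A :=
  mu ∘ (F ⊗ G) ∘ assocI X A A ∘ (idm X ⊗ D).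

Lemma convrK {X : Ob} (F : Mor (X ⊗o A) A) : convr (convr F (idm A)) S = F.
Proof.
rewrite /convr [_ ⊗ S]tensm_lfirst !tensm_compl !compA.
rwc interchange; rwc mulA; rewrite -[idm (A ⊗o A)]tensm_idm; rwc assoc_nat; rwc assoc_nat.
rwc <- assocI_nat; rwc <- tensm_compr; rewrite coassoc !tensm_compr !compA.
rwc pentagonV; rwc assocIK; rwc assocI_nat; rwc <- tensm_rfirst.
rewrite [F ⊗ D]tensm_lfirst !compA; rwc <- tensm_compr; rwc <- tensm_compr.
rewrite antipoder tensm_compr !compA; rwc mulm1; rwc interchange; rwc runit_nat.
rewrite runit_tens -tensm_idm !compA; rwc assoc_nat; rwc assocIK.
rwc <- tensm_compr; rwc <- tensm_compr.
by rewrite -compA counitr runitIK tensm_idm compm1.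
Qed.

Lemma convr_antipode_counit :
  convr (S ∘ lunit A ∘ (eps ⊗ idm A)) (idm A) = eta ∘ lunit I ∘ (eps ⊗ eps).
Proof.
rewrite /convr !tensm_compl !compA; rwc <- assocI_nat; rwc lunit_tens_assocI.
rwc <- tensm_rfirst; rewrite [eps ⊗ D]tensm_lfirst !compA.
rwc lunit_nat; rwc antipodel; rwc <- (@lunit_nat _ _ _ eps); by rwc <- tensm_lfirst.
Qed.

Lemma Psi12_comul :
  assoc (A ⊗o A) A A ∘ (assocI A A A ⊗ idm A) ∘ ((idm A ⊗ braid A A) ⊗ idm A)
  ∘ (assoc A A A ⊗ idm A) ∘ ((D ⊗ idm A) ⊗ idm A) ∘ assocI A A A ∘ (idm A ⊗ D)
  = Psi12 A ∘ (D ⊗ D).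
Proof.
rwc <- assocI_nat; rwc <- tensm_rfirst.
rewrite [(_ ⊗ braid _ _) ⊗ _]tensm_assoc !compA; rwc pentagonVr; rwc pentagonVl.
by rewrite /Psi12 !tensm_compr !compA.
Qed.

(* [Phi] is a ⊗ b ↦ a₍₁₎ ⊗ b ⊗ a₍₂₎. *)
Local Notation Phi := (assocI A A A ∘ (idm A ⊗ braid A A) ∘ assoc A A A ∘ (D ⊗ idm A)).

Lemma convr_antipode_mul :
  convr (mu ∘ ((S ∘ mu) ⊗ idm A) ∘ Phi) (idm A) = eta ∘ lunit I ∘ (eps ⊗ eps).
Proof.
rewrite /convr !tensm_compl !compA; rwc mulA; rwc assoc_nat; rwc assoc_nat.
rwc Psi12_comul; rwc interchange; rwc interchange; rwc <- tensm_rfirst.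
move: comul_mul; rewrite /Psi12 !compA => comul_mulE.
rwc <- comul_mulE; rwc antipodel; by rwc counit_mul.
Qed.

(* Both sides have the same convolution with [idm A], which is convolution-invertible. *)
Lemma antipode_mul_Phi : mu ∘ ((S ∘ mu) ⊗ idm A) ∘ Phi = S ∘ lunit A ∘ (eps ⊗ idm A).
Proof.
by rewrite -[LHS]convrK -[RHS]convrK convr_antipode_mul convr_antipode_counit.
Qed.

Lemma braid_counitl :
  braid A A = lunit (A ⊗o A) ∘ (eps ⊗ braid A A) ∘ assoc A A A ∘ (D ⊗ idm A).
Proof.
rewrite [eps ⊗ braid A A]tensm_lfirst !compA; rwc lunit_nat.
rewrite -[idm (A ⊗o A)]tensm_idm; rwc <- assoc_nat; rwc lunit_tens.
rwc <- tensm_compl; rwc <- tensm_compl.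
by rewrite -compA counitl lunitIK tensm_idm compm1.
Qed.

Lemma Phi_coassoc :
  (assocI A A A ⊗ idm A) ∘ ((idm A ⊗ braid A A) ⊗ idm A) ∘ (assoc A A A ⊗ idm A)
  ∘ ((D ⊗ idm A) ⊗ idm A) ∘ assocI A A A ∘ (idm A ⊗ braid A A) ∘ assoc A A A ∘ (D ⊗ idm A)
  = assocI (A ⊗o A) A A ∘ (idm (A ⊗o A) ⊗ D) ∘ assocI A A A ∘ (idm A ⊗ braid A A)
    ∘ assoc A A A ∘ (D ⊗ idm A).
Proof.
have coassocV : (idm A ⊗ D) ∘ D = assoc A A A ∘ (D ⊗ idm A) ∘ D.
  by rewrite -compA coassoc !compA assocIK comp1m.
rwc <- assocI_nat; rwc <- interchange; rwc assoc_natl.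
rewrite assoc_braid_last [idm (A ⊗o A) ⊗ D]idm_tensm_assoc !compA.
rwcR assocIK; rwcR <- tensm_compr; rwcR <- braid_nat.
rewrite braid_tensl !tensm_compr !compA; rwcR <- assoc_nat; rwcR <- tensm_compl.
by rewrite coassocV !tensm_compl !compA.
Qed.

Lemma antipode_antimultiplicative : antimultiplicative mu S.
Proof.
have E : mu ∘ ((S ∘ lunit A ∘ (eps ⊗ idm A)) ⊗ S) ∘ Phi = mu ∘ (S ⊗ S) ∘ braid A A.
  rewrite [braid A A in RHS]braid_counitl !tensm_comp_idr ?tensm_compl !compA.
  rwcL <- assocI_nat; rwcL lunit_tens_assocI; by rwcL <- tensm_rfirst.
rewrite /antimultiplicative -E -antipode_mul_Phi [_ ⊗ S]tensm_lfirst !tensm_compl !compA.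
rwc Phi_coassoc; rwc interchange; rwc mulA; rwc assoc_natr; rwc assoc_nat; rwc assoc_nat.
rwc assocIK; rwc <- tensm_compr; rwc <- tensm_compl; rwc interchange; rwc <- tensm_compr.
rewrite antipoder tensm_compr !compA; rwc <- interchange; rwc mulm1; rwc runit_nat.
rwc assocI_natr; rwc runit_tens_assocI; rwc <- tensm_compr; rwc <- tensm_compr.
rwc <- braid_nat; rwc runit_braid; rewrite tensm_compr !compA.
rwc <- assoc_nat; rwc triangle; rwc <- tensm_compl; rwc <- tensm_compl.
by rewrite -[runit A ∘ _ ∘ D]compA counitr runitIK tensm_idm compm1.
Qed.
End Antipode.

Section AntimultiplicativeMaps.
Variable C : BraidedCat.
Variables (A : Obj C) (mu : Mor (A ⊗o A) A).

Lemma antimultiplicative_inv (S Sinv : Mor A A) :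
  S ∘ Sinv = idm A -> Sinv ∘ S = idm A -> antimultiplicative mu S ->
  Sinv ∘ mu = mu ∘ (Sinv ⊗ Sinv) ∘ braidI A A.
Proof.
move=> SSinv SinvS S_anti; apply: (mono_cancel S Sinv SinvS).
rewrite !compA SSinv comp1m; rwc S_anti; rwc braid_nat; rwc <- tensm_comp.
by rewrite SSinv tensm_idm compm1; rwc braidIK.
Qed.

(* σ contributes Ψ² and S⁻¹ contributes Ψ⁻¹, leaving a single braiding. *)
Lemma ribbon_antimultiplicative (sigma Sinv : Mor A A) :
  sigma ∘ mu = mu ∘ (sigma ⊗ sigma) ∘ braid A A ∘ braid A A ->
  Sinv ∘ mu = mu ∘ (Sinv ⊗ Sinv) ∘ braidI A A ->
  antimultiplicative mu (sigma ∘ Sinv).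
Proof.
move=> sigma_mul Sinv_mul; rewrite /antimultiplicative -compA Sinv_mul !compA sigma_mul.
by rwc braid_nat; rwc braidIK; rwc braid_nat; rwc <- tensm_comp.
Qed.
End AntimultiplicativeMaps.

Section TwistedAction.
Variable C : BraidedCat.
Variables (A M : Obj C) (mu : Mor (A ⊗o A) A) (tau : Mor A A).
Variables (l : Mor (A ⊗o M) M) (r : Mor (M ⊗o A) M).

Lemma twisted_action_right :
  l ∘ (mu ⊗ idm M) = l ∘ (idm A ⊗ l) ∘ assoc A A M -> antimultiplicative mu tau ->
  right_action mu (twisted_action l tau).
Proof.
move=> lmod tau_anti; rewrite /right_action /twisted_action.
have lmodV : l ∘ (idm A ⊗ l) = l ∘ (mu ⊗ idm M) ∘ assocI A A M.
  by rewrite lmod -compA assocIK compm1.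
rewrite !tensm_compl !compA; rwcL braid_nat; rwcL braid_nat; rwcL braid_nat.
rwcL <- interchange; rwcL lmodV; rwcL assocI_natl; rwcL assocI_nat.
rewrite [braid (M ⊗o A) A]braid_tensl !compA; rwcL <- hexagon1; rwcL assocK; rwcL assocIK.
rwcL braid_nat; rwcL <- tensm_compl; rwcL <- tensm_compl; rwcL <- tensm_compl.
rwcL <- tensm_rfirst; rwcL <- tau_anti; rwcL tensm_compl; by rwcL <- braid_nat.
Qed.

Lemma twisted_action_braided_commute :
  l ∘ (idm A ⊗ r) ∘ assoc A M A = r ∘ (l ⊗ idm A) ->
  twisted_action l tau ∘ (r ⊗ idm A)
  = r ∘ (twisted_action l tau ⊗ idm A) ∘ assocI M A A ∘ (idm M ⊗ braid A A) ∘ assoc M A A.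
Proof.
move=> lr; rewrite /twisted_action.
have lrV : l ∘ (idm A ⊗ r) = r ∘ (l ⊗ idm A) ∘ assocI A M A.
  by rewrite -lr -compA assocIK compm1.
rewrite !tensm_compl !compA; rwcL braid_nat; rwcL <- interchange; rwcL lrV.
rwcL assocI_natl; rewrite [braid (M ⊗o A) A]braid_tensl !compA; by rwcL assocK.
Qed.
End TwistedAction.

Section DiagonalAction.
Variable C : BraidedCat.
Variables (A M : Obj C) (mu : Mor (A ⊗o A) A) (D : Mor A (A ⊗o A)).
Variables (r L : Mor (M ⊗o A) M).
Hypothesis comul_mul : D ∘ mu = (mu ⊗ mu) ∘ Psi12 A ∘ (D ⊗ D).
Hypothesis r_action : right_action mu r.
Hypothesis L_action : right_action mu L.
Hypothesis L_r_commute :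
  L ∘ (r ⊗ idm A) = r ∘ (L ⊗ idm A) ∘ assocI M A A ∘ (idm M ⊗ braid A A) ∘ assoc M A A.

Local Notation K := (assoc A A A ∘ (braid A A ⊗ idm A) ∘ assocI A A A).

Lemma diagonal_right_action : right_action mu (diagonal_action D r L).
Proof.
have reassoc :
    (assoc M A A ⊗ idm (A ⊗o A)) ∘ assocI (M ⊗o A) A (A ⊗o A) ∘ (idm (M ⊗o A) ⊗ K)
    ∘ assoc (M ⊗o A) A (A ⊗o A) ∘ (assocI M A A ⊗ idm (A ⊗o A)) ∘ ((idm M ⊗ D) ⊗ D)
    = assocI M (A ⊗o A) (A ⊗o A) ∘ (idm M ⊗ assocI A A (A ⊗o A)) ∘ (idm M ⊗ (idm A ⊗ K))
      ∘ (idm M ⊗ assoc A A (A ⊗o A)) ∘ (idm M ⊗ (D ⊗ D)) ∘ assoc M A A.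
  by rwcR <- assoc_nat; rwcL (assoc_conj_inner _).
rewrite /right_action /diagonal_action !tensm_compl !compA.
rwcL interchange; rwcL assocI_natl; rwcL <- (@tensm_compl _ _ _ _ _ (r ⊗ idm A) L).
rewrite L_r_commute !tensm_compl !compA; rwcL r_action; rwcL assoc_nat; rwcL interchange.
rwcL assoc_braid_mid; rwcL <- tensm_compr; rwcL <- tensm_compr.
rwcL interchange; rwcL assoc_nat; rwcL interchange; rwcL (@interchange _ _ _ _ _ L K).
rwcL assocI_natl; rwcL (@interchange _ _ _ _ _ L mu).
rwcL (@interchange _ _ _ _ _ (L ⊗ idm A) mu).
rwcL <- (@tensm_compl _ _ _ _ _ (L ⊗ idm A) L); rewrite L_action !tensm_compl !compA.
rwcL <- (@interchange _ _ _ _ _ (assoc M A A) mu); rwcL <- tensm_rfirst; rwcL reassoc.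
rwcR <- tensm_compr; rewrite comul_mul /Psi12 ![idm M ⊗ (_ ∘ _)]tensm_compr !compA.
by rwcR assocI_nat; rewrite [(idm M ⊗ mu) ⊗ mu]tensm_rfirst !compA.
Qed.
End DiagonalAction.

Lemma blackR_diagonal (C : BraidedCat) (A M : Obj C) (Delta : Mor A (A ⊗o A))
    (sigma Sinv : Mor A A) (l : Mor (A ⊗o M) M) (r : Mor (M ⊗o A) M) :
  blackR Delta sigma Sinv l r = diagonal_action Delta r (twisted_action l (sigma ∘ Sinv)).
Proof.
rewrite /blackR /diagonal_action /twisted_action !compA.
by rwcL assocI_natl; rwcL assocK; rewrite !tensm_compl !compA.
Qed.

Theorem mainTheorem4 (C : BraidedCat) (A M : Obj C)
    (mu : Mor (A ⊗o A) A) (eta : Mor unit_obj A) (sigma : Mor A A)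
    (Delta : Mor A (A ⊗o A)) (eps : Mor A unit_obj) (S Sinv : Mor A A)
    (l : Mor (A ⊗o M) M) (r : Mor (M ⊗o A) M) :
  is_ribbon_algebra mu eta sigma ->
  is_hopf_algebra mu eta Delta eps S ->
  S ∘ Sinv = idm A -> Sinv ∘ S = idm A ->
  is_bimodule mu eta l r ->
  blackR Delta sigma Sinv l r ∘ (blackR Delta sigma Sinv l r ⊗ idm A)
  = blackR Delta sigma Sinv l r ∘ (idm M ⊗ mu) ∘ assoc M A A.
Proof.
move=> [[mulA [_ mulm1]] [_ [sigma_mul _]]]
  [_ [[coassoc [counitl counitr]] [comul_mul [counit_mul [_ [_ [antipodel antipoder]]]]]]]
  SSinv SinvS [lmod [_ [r_action [_ lr]]]].
have S_anti : antimultiplicative mu S.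
  exact: (antipode_antimultiplicative mulA mulm1 coassoc counitl counitr comul_mul
            counit_mul antipodel antipoder).
have tau_anti : antimultiplicative mu (sigma ∘ Sinv).
  by apply: ribbon_antimultiplicative sigma_mul _; apply: antimultiplicative_inv S_anti.
rewrite blackR_diagonal; apply: diagonal_right_action comul_mul r_action _ _.
- exact: twisted_action_right.
- exact: twisted_action_braided_commute.
Qed.
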